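(* Let $n\ge2$ and let $\mathcal G_n$, $\mathcal N_{0,n}$, $z_g$, $U_m(z_g)$ be as in the context. Let $D=\Theta((\gamma,g,\mu),C(\mu\eta))$ be a compact open bisection in $\mathcal G_n$ ($\gamma,\mu,\eta\in X^*$, $g\in\mathfrak G_n$). If $[(\varnothing,e,\varnothing),\mathbf 1^\infty]\in\overline D$, then there exist $m_D\in\mathbb N$ and $g_D\in\mathcal N_{0,n}$ such that $$D\cap\Bigl(\bigcup_{h\in\mathcal N_{0,n}}U_{m_D}(z_h)\Bigr)=U_{m_D}(z_{g_D}).$$
   Context: Let $X=\{\mathbf 0,\mathbf 1\}$, $X^*$ the finite words (with empty word $\varnothing$), $X^\omega$ the infinite words, $C(\eta)=\{\eta w:w\in X^\omega\}$, $\mathbf 1^m$ and $\mathbf 1^\infty$ the finite/infinite words of ones. Fix $n\ge2$, a primitive polynomial $f_n$ of degree $n$ over $\mathbb F_2$ with root $\alpha$, and $\operatorname{Tr}(\beta)=\beta+\beta^2+\dots+\beta^{2^{n-1}}\in\mathbb F_2$. $\mathfrak G_n$ is the group of automorphisms of the binary rooted tree $X^*$ generated by $a$ ($a\cdot(\mathbf 0w)=\mathbf 1w$, $a\cdot(\mathbf 1w)=\mathbf 0w$) and $\iota_n(\beta)$, $\beta\in\mathbb F_{2^n}$, where $\iota_n(\beta)\cdot(\mathbf 0w)=\mathbf 0(a^{\operatorname{Tr}(\beta)}\cdot w)$, $\iota_n(\beta)\cdot(\mathbf 1w)=\mathbf 1(\iota_n(\alpha\beta)\cdot w)$; restrictions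 $g|_x$ are given by $g\cdot(xw)=(g\cdot x)(g|_x\cdot w)$. $\mathcal N_{0,n}=\iota_n(\mathbb F_{2^n})$ and $e=\iota_n(0)$ is the identity. $\mathcal G_n$ is the groupoid of germs of the action of the inverse semigroup $\{(\eta,g,\mu)\}\cup\{0\}$ on $X^\omega$ with $(\eta,g,\mu):C(\mu)\to C(\eta)$, $\mu w\mapsto\eta(g\cdot w)$; germs $[(\eta,g,\mu),w]$, $w\in C(\mu)$, with $[(\eta,g,\mu),w]=[(\eta',g',\mu'),w']$ iff $w=w'$ and some finite prefix $\nu=\mu\epsilon=\mu'\epsilon'$ of $w$ satisfies $\eta(g\cdot\epsilon)=\eta'(g'\cdot\epsilon')$ and $g|_\epsilon=g'|_{\epsilon'}$. $\Theta(s,U)=\{[s,w]:w\in U\}$ for $s=(\eta,g,\mu)$, $U\subseteq C(\mu)$ open; these form a basis of the topology. $z_g=[(\varnothing,g,\varnothing),\mathbf 1^\infty]$ and $U_m(z_g)=\Theta((\varnothing,g,\varnothing),C(\mathbf 1^m))$. *)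

From mathcomp Require Import all_boot all_order all_algebra all_field.
Set Implicit Arguments. Unset Strict Implicit. Unset Printing Implicit Defensive.
Import GRing.Theory.
Local Open Scope ring_scope.

(* Alphabet X = bool : letter 0 = false, letter 1 = true.
   Finite words X^* = seq bool, infinite words X^omega = nat -> bool. *)

(* The field F_{2^n} is an abstract finite field F of characteristic 2 with
   #|F| = 2^n; alpha is a root of a primitive polynomial of degree n,
   i.e. a generator of the multiplicative group (primitive (2^n-1)-th root). *)

Definition trace (F : finFieldType) (n : nat) (b : F) : F :=
  \sum_(i < n) b ^+ (2 ^ i).

Definition a_act (w : seq bool) : seq bool :=
  match w with [::] => [::] | x :: w' => (~~ x) :: w' end.

Fixpoint iota_act (F : finFieldType) (n : nat) (alpha : F) (b : F)
  (w : seq bool) : seq bool :=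
  match w with
  | [::] => [::]
  | false :: w' => false :: (if trace n b == 1 then a_act w' else w')
  | true :: w' => true :: iota_act n alpha (alpha * b) w'
  end.

Inductive inGn (F : finFieldType) (n : nat) (alpha : F) :
    (seq bool -> seq bool) -> Prop :=
  | Gn_id : inGn n alpha id
  | Gn_a : inGn n alpha a_act
  | Gn_iota b : inGn n alpha (iota_act n alpha b)
  | Gn_comp f g : inGn n alpha f -> inGn n alpha g -> inGn n alpha (f \o g)
  | Gn_inv f g : inGn n alpha f -> cancel f g -> cancel g f -> inGn n alpha g
  | Gn_ext f g : inGn n alpha f -> f =1 g -> inGn n alpha g.

(* Restriction g|_x : g(x w) = (g x)(g|_x w). *)
Definition restr (g : seq bool -> seq bool) (x : seq bool) : seq bool -> seq bool :=
  fun w => drop (size x) (g (x ++ w)).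

Definition pref (w : nat -> bool) (k : nat) : seq bool := mkseq w k.

Definition cyl (eta : seq bool) : (nat -> bool) -> Prop :=
  fun w => pref w (size eta) = eta.

Definition cantor_open (U : (nat -> bool) -> Prop) : Prop :=
  forall w, U w -> exists k, forall w', cyl (pref w k) w' -> U w'.

(* Inverse semigroup elements (eta, g, mu) (the zero is not needed: it has
   empty domain and contributes no germs). *)
Record triple := Triple { t_eta : seq bool; t_g : seq bool -> seq bool;
                          t_mu : seq bool }.

Definition valid_triple (F : finFieldType) (n : nat) (alpha : F) (s : triple) :=
  inGn n alpha (t_g s).

Record germ := Germ { g_s : triple; g_w : nat -> bool }.

Definition valid_germ (F : finFieldType) (n : nat) (alpha : F) (x : germ) :=
  valid_triple n alpha (g_s x) /\ cyl (t_mu (g_s x)) (g_w x).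

Definition germ_eq (x y : germ) : Prop :=
  g_w x =1 g_w y /\
  exists k : nat,
    let nu := pref (g_w x) k in
    let mu := t_mu (g_s x) in let mu' := t_mu (g_s y) in
    let eps := drop (size mu) nu in let eps' := drop (size mu') nu in
    [/\ mu ++ eps = nu, mu' ++ eps' = nu,
        t_eta (g_s x) ++ t_g (g_s x) eps = t_eta (g_s y) ++ t_g (g_s y) eps'
      & restr (t_g (g_s x)) eps =1 restr (t_g (g_s y)) eps'].

Definition Theta (F : finFieldType) (n : nat) (alpha : F) (s : triple)
    (U : (nat -> bool) -> Prop) : germ -> Prop :=
  fun x => valid_germ n alpha x /\
    exists w, U w /\ cyl (t_mu s) w /\ germ_eq x (Germ s w).

Definition gopen (F : finFieldType) (n : nat) (alpha : F) (O : germ -> Prop) :=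
  forall x, O x -> exists s U,
    [/\ valid_triple n alpha s, cantor_open U,
        (forall w, U w -> cyl (t_mu s) w),
        Theta n alpha s U x & forall y, Theta n alpha s U y -> O y].

Definition gclosure (F : finFieldType) (n : nat) (alpha : F) (D : germ -> Prop)
    : germ -> Prop :=
  fun x => valid_germ n alpha x /\
    forall O, gopen n alpha O -> O x -> exists y, O y /\ D y.

Definition ones : nat -> bool := fun _ => true.
Definition ones_m (m : nat) : seq bool := nseq m true.

Definition z_ (g : seq bool -> seq bool) : germ := Germ (Triple [::] g [::]) ones.

Definition U_ (F : finFieldType) (n : nat) (alpha : F) (m : nat)
    (g : seq bool -> seq bool) : germ -> Prop :=
  Theta n alpha (Triple [::] g [::]) (cyl (ones_m m)).

From mathcomp Require Import all_boot all_order all_algebra all_field.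
From Stdlib Require Import FunctionalExtensionality.
Set Implicit Arguments. Unset Strict Implicit. Unset Printing Implicit Defensive.
Import GRing.Theory.
Local Open Scope ring_scope.

(* Elements of G_n are contracting: their restrictions at all long enough words are
   products of at most two of the generators a and iota(b).  Since the identity germ
   [(0,e,0),1^oo] lies in the closure of D, for m large some germ of D at a point of
   C(1^m) is the identity germ.  Reading this equality on a long prefix 1^m rho shows that
   the restriction h of g at the corresponding word 1^k fixes rho and restricts to the
   identity at rho; among products of two generators only the iota(b) do so, hence
   h = iota(b).  As iota(c) restricts to iota(alpha^m c) at 1^m, every germ of D on C(1^m)
   is then the germ of iota(b / alpha^m) at the same point. *)

Section Trace.
Variables (F : finFieldType) (n : nat).
Hypotheses (charF2 : (2 \in [pchar F])%N) (cardF : #|F| = (2 ^ n)%N).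
Hypothesis n_gt0 : (0 < n)%N.

Lemma exprD_pow2_pchar2 (x y : F) i : (x + y) ^+ (2 ^ i) = x ^+ (2 ^ i) + y ^+ (2 ^ i).
Proof.
by apply: exprDn_pchar; rewrite pnatX (eq_pnat _ (pcharf_eq charF2)) pnat_id.
Qed.

Lemma trace0 : trace n (0 : F) = 0.
Proof. by rewrite /trace big1 // => i _; rewrite expr0n expn_eq0. Qed.

Lemma traceD (x y : F) : trace n (x + y) = trace n x + trace n y.
Proof. by rewrite /trace -big_split; apply: eq_bigr => i _; apply: exprD_pow2_pchar2. Qed.

Lemma trace_sqr (x : F) : trace n x ^+ 2 = trace n x.
Proof.
have Frob2 : forall y : F, y ^+ 2 = pFrobenius_aut charF2 y by move=> y; rewrite pFrobenius_autE.
rewrite Frob2 rmorph_sum /=.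
under eq_bigr do rewrite -Frob2 -exprM -expnSr.
case: n n_gt0 cardF => // k _ cardFk.
by rewrite /trace big_ord_recr big_ord_recl /= -cardFk expf_card addrC.
Qed.

Lemma trace_eq01 (x : F) : trace n x = 0 \/ trace n x = 1.
Proof.
have : trace n x * (trace n x - 1) = 0 by rewrite mulrBr mulr1 -expr2 trace_sqr subrr.
move/eqP; rewrite mulf_eq0 subr_eq0 => /orP[]/eqP; tauto.
Qed.

Lemma trace_eq1D (x y : F) :
  (trace n (x + y) == 1) = (trace n x == 1) (+) (trace n y == 1).
Proof.
rewrite traceD; have zero_neq1 : ((0 : F) == 1) = false by rewrite eq_sym oner_eq0.
by case: (trace_eq01 x) (trace_eq01 y) => -> [] ->;
  rewrite ?addr0 ?add0r ?addrr_pchar2 ?eqxx ?zero_neq1.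
Qed.

End Trace.

Definition tree_endo (g : seq bool -> seq bool) :=
  (forall u, size (g u) = size u) /\ (forall u v, take (size u) (g (u ++ v)) = g u).

Lemma tree_endo_cat g u v : tree_endo g -> g (u ++ v) = g u ++ restr g u v.
Proof. by case=> _ Hg; rewrite /restr -[LHS](cat_take_drop (size u)) Hg. Qed.

Lemma restr0 g : restr g [::] = g.
Proof. by apply: functional_extensionality => w; rewrite /restr drop0. Qed.

Lemma restr_cat g u v : restr g (u ++ v) = restr (restr g u) v.
Proof.
by apply: functional_extensionality => w; rewrite /restr drop_drop size_cat catA addnC.
Qed.

Lemma restr_id u : restr id u = id.
Proof. by apply: functional_extensionality => w; rewrite /restr /= drop_size_cat. Qed.

Lemma restr_comp f g u :
  tree_endo f -> tree_endo g -> restr (f \o g) u = restr f (g u) \o restr g u.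
Proof.
move=> Tf Tg; apply: functional_extensionality => w.
by rewrite {1}/restr /= (tree_endo_cat _ _ Tg) (tree_endo_cat _ _ Tf) drop_size_cat // Tf.1 Tg.1.
Qed.

Lemma tree_endo_id : tree_endo id.
Proof. by split=> // u v; rewrite take_size_cat. Qed.

Lemma tree_endo_comp f g : tree_endo f -> tree_endo g -> tree_endo (f \o g).
Proof.
move=> Tf Tg; split=> [u | u v] /=; first by rewrite Tf.1 Tg.1.
by rewrite (tree_endo_cat _ _ Tg) (tree_endo_cat _ _ Tf) take_size_cat // Tf.1 Tg.1.
Qed.

Lemma tree_endo_restr g u : tree_endo g -> tree_endo (restr g u).
Proof.
move=> Tg; have size_restr v : size (restr g u v) = size v.
  by rewrite /restr size_drop Tg.1 size_cat addKn.
split=> // v w; rewrite {1}/restr catA (tree_endo_cat (u ++ v) _ Tg).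
by rewrite (tree_endo_cat _ _ Tg) -catA drop_size_cat ?Tg.1 // take_size_cat.
Qed.

Lemma tree_endo_inv f g : tree_endo f -> cancel f g -> cancel g f -> tree_endo g.
Proof.
move=> Tf fK gK; have size_g u : size (g u) = size u by rewrite -{2}(gK u) Tf.1.
split=> // u v; set x := g (u ++ v).
have size_take : size (take (size u) x) = size u.
  by rewrite size_takel // size_g size_cat leq_addr.
have := Tf.2 (take (size u) x) (drop (size u) x).
by rewrite cat_take_drop size_take gK take_size_cat // => u_eq; rewrite [in RHS]u_eq fK.
Qed.

Lemma a_actK : involutive a_act.
Proof. by case=> // x w /=; rewrite negbK. Qed.

Lemma tree_endo_a : tree_endo a_act.
Proof. by split=> [[] | [|x u] v] //=; rewrite ?take0 ?take_size_cat. Qed.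

#[local] Hint Resolve tree_endo_a : core.

Lemma restr_a_act u : u != [::] -> restr a_act u = id.
Proof.
by case: u => // x u _; apply: functional_extensionality => w; rewrite /restr /= drop_size_cat.
Qed.

Section Iota.
Variables (F : finFieldType) (n : nat) (alpha : F).
Hypotheses (charF2 : (2 \in [pchar F])%N) (cardF : #|F| = (2 ^ n)%N).
Hypothesis n_gt0 : (0 < n)%N.

Local Notation I := (iota_act n alpha).

Lemma tree_endo_iota b : tree_endo (I b).
Proof.
split=> [u | u v].
  by elim: u b => [|[] u IHu] b //=; [rewrite IHu | case: ifP => //; case: u {IHu}].
elim: u b => [|[] u IHu] b /=; first by rewrite take0.
  by rewrite IHu.
by case: ifP => _; rewrite ?(tree_endo_a.2) ?take_size_cat.
Qed.

#[local] Hint Resolve tree_endo_iota : core.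

Lemma iota_act0 : I 0 = id.
Proof.
apply: functional_extensionality; elim=> [|[] w IHw] //=; first by rewrite mulr0 IHw.
by rewrite trace0 eq_sym oner_eq0.
Qed.

Lemma iota_actD b c w : I b (I c w) = I (b + c) w.
Proof.
elim: w b c => [|[] w IHw] b c //=; first by rewrite IHw mulrDr.
by rewrite (trace_eq1D charF2 cardF n_gt0); do 2!case: (_ == 1) => //=; rewrite a_actK.
Qed.

Lemma iota_actK b : involutive (I b).
Proof. by move=> w; rewrite iota_actD addrr_pchar2 // iota_act0. Qed.

Lemma restr_iota_true b : restr (I b) [:: true] = I (alpha * b).
Proof. by apply: functional_extensionality => w; rewrite /restr /= drop0. Qed.

Lemma restr_iota_false b :
  restr (I b) [:: false] = if trace n b == 1 then a_act else id.
Proof. by apply: functional_extensionality => w; rewrite /restr /= drop0; case: ifP. Qed.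

Lemma iota_act_ones k c : I c (nseq k true) = nseq k true.
Proof. by elim: k c => [|k IHk] c //=; rewrite IHk. Qed.

Lemma restr_iota_ones k c : restr (I c) (nseq k true) = I (alpha ^+ k * c).
Proof.
elim: k c => [|k IHk] c; first by rewrite restr0 expr0 mul1r.
by rewrite -[nseq _ _]/([:: true] ++ nseq k true) restr_cat restr_iota_true IHk mulrA -exprSr.
Qed.

Definition atomic h := (exists b, h = I b) \/ h = a_act.

Definition nuclear h := atomic h \/ exists b, h = a_act \o I b \/ h = I b \o a_act.

Lemma atomic_id : atomic id.
Proof. by left; exists 0; rewrite iota_act0. Qed.

Lemma atomic_iota b : atomic (I b).
Proof. by left; exists b. Qed.

Lemma tree_endo_atomic h : atomic h -> tree_endo h.
Proof. by case=> [[b ->] | ->]; [apply: tree_endo_iota | apply: tree_endo_a]. Qed.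

Lemma tree_endo_nuclear h : nuclear h -> tree_endo h.
Proof.
by case=> [/tree_endo_atomic // | [b [->|->]]]; apply: tree_endo_comp.
Qed.

Lemma atomic_restr h u : atomic h -> atomic (restr h u).
Proof.
elim: u h => [|x u IHu] h Ah; first by rewrite restr0.
rewrite -cat1s restr_cat; apply: IHu.
case: Ah => [[b ->] | ->]; last by rewrite restr_a_act //; apply: atomic_id.
case: x; first by rewrite restr_iota_true; apply: atomic_iota.
by rewrite restr_iota_false; case: ifP => _; [right | apply: atomic_id].
Qed.

Lemma nuclear_restr h u : nuclear h -> u != [::] -> atomic (restr h u).
Proof.
case: u => // x u Nh _; rewrite -cat1s restr_cat; apply: atomic_restr.
case: Nh => [/atomic_restr // | [b [->|->]]].
  by rewrite restr_comp // restr_a_act; case: x => //; apply/atomic_restr/atomic_iota.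
by rewrite restr_comp // restr_a_act //; apply/atomic_restr/atomic_iota.
Qed.

Lemma nuclear_comp_atomic f h : atomic f -> atomic h -> nuclear (f \o h).
Proof.
case=> [[b ->] | ->] [[c ->] | ->].
- by left; left; exists (b + c); apply: functional_extensionality => w; apply: iota_actD.
- by right; exists b; right.
- by right; exists c; left.
- have -> : a_act \o a_act = id by apply: functional_extensionality; apply: a_actK.
  by left; apply: atomic_id.
Qed.

Lemma nuclear_restr_comp f h u :
  nuclear f -> nuclear h -> u != [::] -> nuclear (restr (f \o h) u).
Proof.
move=> Nf Nh u_nil; have [Tf Th] := (tree_endo_nuclear Nf, tree_endo_nuclear Nh).
rewrite restr_comp //; apply: nuclear_comp_atomic; last exact: nuclear_restr.
by apply: nuclear_restr Nf _; rewrite -size_eq0 Th.1 size_eq0.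
Qed.

Lemma nuclear_inv f h : nuclear f -> cancel h f -> nuclear h.
Proof.
move=> Nf hK.
suff [f' [Nf' fK]] : exists f', nuclear f' /\ cancel f f'.
  have -> // : h = f' by apply: functional_extensionality => w; rewrite -{2}(hK w) fK.
case: Nf => [[[b ->] | ->] | [b [->|->]]].
- by exists (I b); split; [left; apply: atomic_iota | apply: iota_actK].
- by exists a_act; split; [left; right | apply: a_actK].
- exists (I b \o a_act); split; first by right; exists b; right.
  by move=> w /=; rewrite a_actK iota_actK.
- exists (a_act \o I b); split; first by right; exists b; left.
  by move=> w /=; rewrite iota_actK a_actK.
Qed.

Definition contracting g :=
  tree_endo g /\ exists R, forall u, (R <= size u)%N -> nuclear (restr g u).

Lemma inGn_contracting g : inGn n alpha g -> contracting g.
Proof.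
elim=> {g} [| | b | f g _ [Tf [Rf Nf]] _ [Tg [Rg Ng]] | f g _ [Tf [Rf Nf]] fK gK | f g _ IHf fg].
- split; first exact: tree_endo_id.
  by exists 0%N => u _; rewrite restr_id; left; apply: atomic_id.
- split; first exact: tree_endo_a.
  by exists 1%N => -[|x u] // _; rewrite restr_a_act //; left; apply: atomic_id.
- split; first exact: tree_endo_iota.
  by exists 0%N => u _; left; apply/atomic_restr/atomic_iota.
- split; first exact: tree_endo_comp.
  exists (maxn Rf Rg).+1 => u size_u; set M := maxn Rf Rg.
  have size_take : size (take M u) = M by rewrite size_takel // ltnW.
  rewrite -(cat_take_drop M u) restr_cat restr_comp //.
  apply: nuclear_restr_comp; first by apply: Nf; rewrite Tg.1 size_take leq_maxl.
    by apply: Ng; rewrite size_take leq_maxr.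
  by rewrite -size_eq0 size_drop subn_eq0 -ltnNge.
- have Tg := tree_endo_inv Tf fK gK.
  split=> //; exists Rf => u size_u.
  apply: (@nuclear_inv (restr f (g u))); first by apply: Nf; rewrite Tg.1.
  by move=> w; rewrite {1}/restr -(tree_endo_cat _ _ Tg) gK drop_size_cat // Tg.1.
- by have <- : f = g by apply: functional_extensionality.
Qed.

Lemma inGn_tree_endo g : inGn n alpha g -> tree_endo g.
Proof. by case/inGn_contracting. Qed.

(* [a_act], [a_act \o I b] and [I b \o a_act] change the first letter of every nonempty word. *)
Lemma nuclear_fixed_restr_id f rho :
  nuclear f -> f rho = rho -> restr f rho = id -> exists b, f = I b.
Proof.
have fixes_true h : restr h [::] = id -> h [:: true] = [:: true] by rewrite restr0 => ->.
case=> [[// | ->] | [b [->|->]]];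
  by case: rho => [_ /fixes_true // | [] r].
Qed.

End Iota.

Lemma pref_take w k k' : (k <= k')%N -> take k (pref w k') = pref w k.
Proof. by move=> le_kk'; rewrite /pref /mkseq -map_take take_iota (minn_idPl le_kk'). Qed.

Lemma pref_split w k k' : (k <= k')%N -> pref w k' = pref w k ++ drop k (pref w k').
Proof. by move=> le_kk'; rewrite -(pref_take w le_kk') cat_take_drop. Qed.

Lemma pref_ones k : pref ones k = ones_m k.
Proof.
apply: (@eq_from_nth _ false); rewrite ?size_mkseq ?size_nseq // => i lt_ik.
by rewrite nth_mkseq // nth_nseq lt_ik.
Qed.

Lemma cyl_ones_le k m w : (k <= m)%N -> cyl (ones_m m) w -> cyl (ones_m k) w.
Proof.
rewrite /cyl !size_nseq => le_km w_ones.
by rewrite -(pref_take w le_km) w_ones take_nseq.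
Qed.

Lemma cyl_ones_prefix s m w :
  (size s <= m)%N -> cyl (ones_m m) w -> cyl s w -> s = ones_m (size s).
Proof.
move=> le_sm /(cyl_ones_le le_sm); rewrite /cyl size_nseq => <- <-.
by rewrite /pref size_mkseq.
Qed.

Definition in_dom (s : triple) (nu : seq bool) := t_mu s ++ drop (size (t_mu s)) nu = nu.

Definition germ_image (s : triple) (nu : seq bool) :=
  let eps := drop (size (t_mu s)) nu in (t_eta s ++ t_g s eps, restr (t_g s) eps).

Definition germs_agree (s t : triple) (nu : seq bool) :=
  [/\ in_dom s nu, in_dom t nu & germ_image s nu = germ_image t nu].

Lemma germ_eqE x y :
  germ_eq x y <-> g_w x = g_w y /\ exists k, germs_agree (g_s x) (g_s y) (pref (g_w x) k).
Proof.
split=> [[/functional_extensionality xy [k [dx dy im restr_eq]]] | [xy [k [dx dy]]]].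
  split=> //; exists k; split=> //.
  by rewrite /germ_image im (functional_extensionality _ _ restr_eq).
by case=> im restr_eq; split=> [i | ]; [rewrite xy | exists k; split=> //; rewrite restr_eq].
Qed.

Lemma drop_in_dom s nu d :
  in_dom s nu -> drop (size (t_mu s)) (nu ++ d) = drop (size (t_mu s)) nu ++ d.
Proof. by rewrite /in_dom => <-; rewrite -catA !drop_size_cat. Qed.

Lemma in_dom_cat s nu d : in_dom s nu -> in_dom s (nu ++ d).
Proof. by move=> dom_nu; rewrite /in_dom drop_in_dom // catA dom_nu. Qed.

Lemma germ_image_cat s nu d : tree_endo (t_g s) -> in_dom s nu ->
  germ_image s (nu ++ d) =
  ((germ_image s nu).1 ++ (germ_image s nu).2 d, restr (germ_image s nu).2 d).
Proof.
move=> Ts dom_nu; rewrite /germ_image drop_in_dom //=.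
by rewrite (tree_endo_cat _ _ Ts) catA restr_cat.
Qed.

Lemma germs_agree_pref s t w k k' : tree_endo (t_g s) -> tree_endo (t_g t) ->
  (k <= k')%N -> germs_agree s t (pref w k) -> germs_agree s t (pref w k').
Proof.
move=> Ts Tt le_kk' [dom_s dom_t im]; rewrite (pref_split w le_kk').
by constructor; [apply: in_dom_cat.. | rewrite !germ_image_cat // im].
Qed.

Lemma germ_eq_refl x : cyl (t_mu (g_s x)) (g_w x) -> germ_eq x x.
Proof.
move=> x_mu; apply/germ_eqE; split=> //; exists (size (t_mu (g_s x))).
by rewrite x_mu; split=> //; rewrite /in_dom drop_size cats0.
Qed.

Lemma germ_eq_sym x y : germ_eq x y -> germ_eq y x.
Proof.
move=> /germ_eqE [xy [k [dx dy im]]]; apply/germ_eqE; rewrite -xy.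
by split=> //; exists k.
Qed.

Lemma germ_eq_trans x y z : tree_endo (t_g (g_s x)) -> tree_endo (t_g (g_s y)) ->
  tree_endo (t_g (g_s z)) -> germ_eq x y -> germ_eq y z -> germ_eq x z.
Proof.
move=> Tx Ty Tz /germ_eqE [xy [k1 A1]] /germ_eqE [yz [k2 A2]].
apply/germ_eqE; split; first by rewrite xy yz.
exists (maxn k1 k2); rewrite -xy in A2.
have [dx _ im1] := germs_agree_pref Tx Ty (leq_maxl k1 k2) A1.
have [_ dz im2] := germs_agree_pref Ty Tz (leq_maxr k1 k2) A2.
by split=> //; rewrite im1.
Qed.

Lemma germ_eq_of_agree s t w nu :
  germs_agree s t nu -> cyl nu w -> germ_eq (Germ s w) (Germ t w).
Proof. by move=> A w_nu; apply/germ_eqE; split=> //; exists (size nu); rewrite w_nu. Qed.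

Lemma cantor_open_cyl s : cantor_open (cyl s).
Proof.
move=> w w_s; exists (size s) => w'.
by rewrite /cyl [size (pref _ _)]size_mkseq => ->.
Qed.

Lemma germ_eq_id_ones gamma g mu m w : tree_endo g -> (size mu <= m)%N ->
  cyl (ones_m m) w -> cyl mu w ->
  germ_eq (Germ (Triple gamma g mu) w) (Germ (Triple [::] id [::]) w) ->
  exists rho, [/\ gamma ++ g (ones_m (m - size mu)) = ones_m m,
    restr g (ones_m (m - size mu)) rho = rho & restr (restr g (ones_m (m - size mu))) rho = id].
Proof.
move=> Tg le_mu_m w_m w_mu /germ_eqE [_ [k /= A]]; set u := ones_m _.
have [_ _ im] := germs_agree_pref (s := Triple gamma g mu) (t := Triple [::] id [::])
  Tg tree_endo_id (leq_maxl k m) A.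
set nu := pref w (maxn k m) in im; set rho := drop m nu; exists rho.
have nu_split : nu = ones_m m ++ rho.
  by move: w_m; rewrite /cyl size_nseq => w_m; rewrite /nu (pref_split w (leq_maxr k m)) w_m.
have ones_mu : ones_m m = mu ++ u.
  by rewrite {1}(cyl_ones_prefix le_mu_m w_m w_mu) -nseqD subnKC.
have drop_mu : drop (size mu) nu = u ++ rho by rewrite nu_split ones_mu -catA drop_size_cat.
move: im; rewrite /germ_image /= drop0 restr_id drop_mu {1}nu_split.
rewrite (tree_endo_cat _ _ Tg) catA restr_cat ones_mu => -[im_eq ->].
have size_u : size (gamma ++ g u) = size (mu ++ u).
  have /(congr1 size)/eqP := im_eq.
  by rewrite !size_cat (tree_endo_restr _ Tg).1 eqn_add2r => /eqP.
by move/eqP: im_eq; rewrite eqseq_cat // => /andP[/eqP -> /eqP ->].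
Qed.

Section Groupoid.
Variables (F : finFieldType) (n : nat) (alpha : F).
Hypotheses (charF2 : (2 \in [pchar F])%N) (cardF : #|F| = (2 ^ n)%N).
Hypothesis n_gt0 : (0 < n)%N.

Local Notation I := (iota_act n alpha).
Local Notation unit_triple h := (Triple [::] h [::]).

Lemma valid_germ_tree_endo x : valid_germ n alpha x -> tree_endo (t_g (g_s x)).
Proof. by case=> /(inGn_tree_endo charF2 cardF n_gt0). Qed.

Lemma ThetaE s U x : Theta n alpha s U x <->
  valid_germ n alpha x /\ [/\ U (g_w x), cyl (t_mu s) (g_w x) & germ_eq x (Germ s (g_w x))].
Proof.
split=> [[vx [w [Uw [w_mu x_w]]]] | [vx [Ux x_mu x_x]]]; last by split=> //; exists (g_w x).
by have /germ_eqE [/= xw _] := x_w; rewrite xw.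
Qed.

Lemma gopen_U m h : inGn n alpha h -> gopen n alpha (U_ n alpha m h).
Proof.
by move=> hG x Ux; exists (unit_triple h), (cyl (ones_m m)); split=> //; apply: cantor_open_cyl.
Qed.

Lemma U_z m h : inGn n alpha h -> U_ n alpha m h (z_ h).
Proof.
move=> hG; split; first by split.
by exists ones; split; [rewrite /cyl size_nseq pref_ones | split=> //; apply: germ_eq_refl].
Qed.

Lemma Theta_cap_U s U m c : inGn n alpha (t_g s) ->
  (forall w, cyl (ones_m m) w ->
     [/\ U w, cyl (t_mu s) w & germ_eq (Germ s w) (Germ (unit_triple (I c)) w)]) ->
  forall x, (Theta n alpha s U x /\ exists h, U_ n alpha m (I h) x) <-> U_ n alpha m (I c) x.
Proof.
move=> /(inGn_tree_endo charF2 cardF n_gt0) Ts on_cyl x.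
have Tc := tree_endo_iota n alpha c.
split=> [[/ThetaE [vx [_ _ x_s]] [h /ThetaE [_ [x_m _ _]]]] | /ThetaE [vx [x_m _ x_c]]];
  have [Ux x_mu s_c] := on_cyl _ x_m.
  apply/ThetaE; split=> //; split=> //.
  by apply: (germ_eq_trans _ _ _ x_s s_c) => //; apply: valid_germ_tree_endo.
split; last by exists c; apply/ThetaE.
apply/ThetaE; split=> //; split=> //.
by apply: (germ_eq_trans _ _ _ x_c (germ_eq_sym s_c)) => //; apply: valid_germ_tree_endo.
Qed.

Lemma germ_eq_iota_ones gamma g mu m c w : mu = ones_m (size mu) -> (size mu <= m)%N ->
  gamma ++ g (ones_m (m - size mu)) = ones_m m ->
  restr g (ones_m (m - size mu)) = I (alpha ^+ m * c) ->
  cyl (ones_m m) w -> germ_eq (Germ (Triple gamma g mu) w) (Germ (unit_triple (I c)) w).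
Proof.
move=> mu_ones le_mu_m img restr_g; apply: germ_eq_of_agree.
constructor; rewrite /in_dom /germ_image /= ?drop0 ?drop_nseq ?img ?restr_g //.
  by rewrite {1}mu_ones -nseqD subnKC.
by rewrite iota_act_ones restr_iota_ones.
Qed.

End Groupoid.

Theorem mainTheorem8 (n : nat) (hn : (2 <= n)%N)
  (F : finFieldType) (hchar : (2 \in [pchar F])%N) (hcard : #|F| = (2 ^ n)%N)
  (alpha : F) (halpha : ((2 ^ n).-1).-primitive_root alpha)
  (gamma mu eta : seq bool) (g : seq bool -> seq bool)
  (hg : inGn n alpha g) :
  let D := Theta n alpha (Triple gamma g mu) (cyl (mu ++ eta)) in
  gclosure n alpha D (z_ (iota_act n alpha 0)) ->
  exists (mD : nat) (bD : F),
    forall x : germ,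
      (D x /\ exists h : F, U_ n alpha mD (iota_act n alpha h) x) <->
      U_ n alpha mD (iota_act n alpha bD) x.
Proof.
move=> D clD; have n_gt0 : (0 < n)%N := ltnW hn.
have [Tg [R nuclear_g]] := inGn_contracting hchar hcard n_gt0 hg.
pose m := (size mu + size eta + R)%N.
have le_mueta_m : (size (mu ++ eta) <= m)%N by rewrite size_cat leq_addr.
have le_mu_m : (size mu <= m)%N by rewrite /m -addnA leq_addr.
have iota0G := Gn_iota n alpha 0.
have [y [/ThetaE [vy [y_m _ y_0]] /ThetaE [_ [y_mueta y_mu y_D]]]] :=
  clD.2 _ (gopen_U (m := m) iota0G) (U_z m iota0G).
have D_id : germ_eq (Germ (Triple gamma g mu) (g_w y)) (Germ (Triple [::] id [::]) (g_w y)).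
  have Ty := valid_germ_tree_endo hchar hcard n_gt0 vy.
  rewrite -(iota_act0 n alpha).
  by apply: (germ_eq_trans _ _ _ (germ_eq_sym y_D) y_0) => //; apply: tree_endo_iota.
have [rho [img fix_rho restr_rho]] := germ_eq_id_ones Tg le_mu_m y_m y_mu D_id.
have long_u : (R <= size (ones_m (m - size mu)))%N.
  by rewrite size_nseq /m -addnA addKn leq_addl.
have [b restr_g] := nuclear_fixed_restr_id (nuclear_g _ long_u) fix_rho restr_rho.
have alpha_neq0 : alpha != 0 by rewrite (prim_root_eq0 halpha) -lt0n (prim_order_gt0 halpha).
exists m, (b / alpha ^+ m); apply: Theta_cap_U => // w w_m; split.
- by rewrite (cyl_ones_prefix le_mueta_m y_m y_mueta); apply: cyl_ones_le w_m.
- by rewrite (cyl_ones_prefix le_mu_m y_m y_mu); apply: cyl_ones_le w_m.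
- apply: germ_eq_iota_ones (cyl_ones_prefix le_mu_m y_m y_mu) le_mu_m img _ w_m.
  by rewrite restr_g mulrC divfK // expf_neq0.
Qed.
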